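(* Let $f:(M,g_M)\to(N,g_N)$ be a smooth map between Riemannian manifolds. Then $f$ is a conformal Riemannian morphism if and only if there exist a smooth function $\wedge_f:M\to\mathbb{R}^{+}$ and, for each $x\in M$, a linear subspace $H_x\subset T_xM$ with $T_xM=H_x\oplus\ker(df_x)$, such that $Q_{H_x}\circ Q_{H_x}=\wedge_f(x)\,Q_{H_x}$ for all $x\in M$.
   Context: A linear map $T:V\to W$ between real inner-product spaces is a geometric function if there exist a subspace $C\subset V$ with $V=\ker T\oplus C$ and $r>0$ with $\langle T u,T v\rangle=r\langle u,v\rangle$ for all $u,v\in C$ ($r$ is a conformality factor). A smooth $f:(M,g_M)\to(N,g_N)$ is a conformal Riemannian morphism if there is a smooth $\wedge_f:M\to\mathbb{R}^{+}$ such that each $df_x$ is a geometric function with conformality factor $\wedge_f(x)$. For a subspace $H_x\subset T_xM$ with $H_x\oplus\ker(df_x)=T_xM$, define the linear map $(df_{H_x})^{\diamond}:T_{f(x)}N\to T_xM$ by $(df_{H_x})^{\diamond}(X)=((df_x)|_{H_x})^{*}(X)$ if $X\in\mathrm{range}(df_x)$ and $(df_{H_x})^{\diamond}(X)=0$ if $X\in\mathrm{range}(df_x)^{\perp}$, where $((df_x)|_{H_x})^{*}$ is the adjoint of $(df_x)|_{H_x}:H_x\to\mathrm{range}(df_x)$. Set $Q_{H_x}=df_x\circ(df_{H_x})^{\diamond}:T_{f(x)}N\to T_{f(x)}N$. *)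

(* Pointwise (coordinate) model of a smooth map between
   Riemannian manifolds. *)
From HB Require Import structures.
From mathcomp Require Import all_boot all_order all_algebra.
From mathcomp Require Import reals.
From Stdlib Require Import ClassicalEpsilon.
Set Implicit Arguments. Unset Strict Implicit. Unset Printing Implicit Defensive.
Import Order.TTheory GRing.Theory Num.Theory.
Local Open Scope ring_scope.

Section Defs.
Variable R : realType.

Definition ip k (G : 'M[R]_k) (u v : 'rV[R]_k) : R := (u *m G *m v^T) 0 0.

Definition inner_product_mx k (G : 'M[R]_k) : Prop :=
  G^T = G /\ forall u : 'rV[R]_k, u != 0 -> 0 < ip G u u.

(* Linear maps T : V -> W are matrices acting on row vectors: v |-> v *m T.
   ker T is the row space of kermx T; range T is the row space of T.
   Subspaces of R^m are row spaces of square matrices. *)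

Definition complement_of_ker m n (T : 'M[R]_(m, n)) (C : 'M[R]_m) : Prop :=
  mxdirect (C + kermx T) /\ (C + kermx T == 1%:M)%MS.

Definition geometric_with m n (gV : 'M[R]_m) (gW : 'M[R]_n)
    (T : 'M[R]_(m, n)) (r : R) : Prop :=
  exists C : 'M[R]_m, complement_of_ker T C /\ 0 < r /\
    forall u v : 'rV[R]_m, (u <= C)%MS -> (v <= C)%MS ->
      ip gW (u *m T) (v *m T) = r * ip gV u v.

(* P is (df_H)^diamond : on range T it is the adjoint of T|_H : H -> range T,
   on (range T)^perp it is 0. *)
Definition is_diamond m n (gV : 'M[R]_m) (gW : 'M[R]_n)
    (T : 'M[R]_(m, n)) (H : 'M[R]_m) (P : 'M[R]_(n, m)) : Prop :=
  (forall X : 'rV[R]_n, (X <= T)%MS ->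
     (X *m P <= H)%MS /\
     forall u : 'rV[R]_m, (u <= H)%MS -> ip gV u (X *m P) = ip gW (u *m T) X)
  /\ (forall X : 'rV[R]_n,
        (forall u : 'rV[R]_m, ip gW (u *m T) X = 0) -> X *m P = 0).

Definition diamond m n (gV : 'M[R]_m) (gW : 'M[R]_n)
    (T : 'M[R]_(m, n)) (H : 'M[R]_m) : 'M[R]_(n, m) :=
  epsilon (inhabits 0) (is_diamond gV gW T H).

(* Q_H = df o (df_H)^diamond : T_{f x} N -> T_{f x} N *)
Definition Qmap m n (gV : 'M[R]_m) (gW : 'M[R]_n)
    (T : 'M[R]_(m, n)) (H : 'M[R]_m) : 'M[R]_n :=
  diamond gV gW T H *m T.

Definition conformal_riemannian_morphism (M N : Type) m n
    (smooth : (M -> R) -> Prop) (f : M -> N)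
    (gM : M -> 'M[R]_m) (gN : N -> 'M[R]_n) (df : M -> 'M[R]_(m, n)) : Prop :=
  exists lam : M -> R, smooth lam /\ (forall x, 0 < lam x) /\
    forall x, geometric_with (gM x) (gN (f x)) (df x) (lam x).

End Defs.

(* At a point, write [T] for the differential, [H] for a complement of its
   kernel and [P] for the diamond map.  On [H] the composite [A := T P] is the
   self-adjoint operator representing [(u, v) |-> <u T, v T>], and it is
   injective since [T] is injective on [H].  Every row of [P] lies in [H], so
   [Q = P T] satisfies [Q^2 = r Q] iff [A (A - r) = 0] on [H], iff [A = r] on
   [H], iff [<u T, v T> = r <u, v>] on [H], which is conformality with factor
   [r]. *)
From HB Require Import structures.
From mathcomp Require Import all_boot all_order all_algebra.
From mathcomp Require Import reals.
From Stdlib Require Import ClassicalEpsilon.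
Set Implicit Arguments. Unset Strict Implicit. Unset Printing Implicit Defensive.
Import Order.TTheory GRing.Theory Num.Theory.
Local Open Scope ring_scope.

Section InnerProduct.
Variable R : realType.

Lemma ipBr k (g : 'M[R]_k) u v w : ip g u (v - w) = ip g u v - ip g u w.
Proof. by rewrite /ip (linearB (@trmx R 1 k)) mulmxBr !mxE. Qed.

Lemma ipZr k (g : 'M[R]_k) u a v : ip g u (a *: v) = a * ip g u v.
Proof. by rewrite /ip linearZ /= -scalemxAr mxE. Qed.

Lemma ip0r k (g : 'M[R]_k) u : ip g u 0 = 0.
Proof. by rewrite /ip trmx0 mulmx0 mxE. Qed.

Lemma ipxx_eq0 k (g : 'M[R]_k) u : inner_product_mx g -> ip g u u = 0 -> u = 0.
Proof.
move=> [_ pos_g] uu0; case: (eqVneq u 0) => // /pos_g.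
by rewrite uu0 ltxx.
Qed.

Lemma col_eq0 p (w : 'cV[R]_p) : (forall u : 'rV_p, (u *m w) 0 0 = 0) -> w = 0.
Proof.
move=> uw0; apply/matrixP=> i j; rewrite (ord1 j) [RHS]mxE.
by have := uw0 (delta_mx 0 i); rewrite -rowE mxE.
Qed.

Lemma gram_unitmx k p (B : 'M[R]_(k, p)) g :
  inner_product_mx g -> row_free B -> B *m g *m B^T \in unitmx.
Proof.
move=> [_ pos_g] freeB; rewrite unitmxE unitfE; apply/det0P => -[c c0 cG0].
have /pos_g : c *m B != 0 by rewrite mulmx_free_eq0.
rewrite /ip trmx_mul !mulmxA; rewrite !mulmxA in cG0.
by rewrite cG0 mul0mx mxE ltxx.
Qed.

(* Riesz representation in the row space of a row-free [B]: [X *m riesz_mx B g S]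
   is the vector of [B] representing [u |-> (u *m S *m X^T) 0 0]. *)
Definition riesz_mx k p q (B : 'M[R]_(k, p)) (g : 'M_p) (S : 'M_(p, q)) : 'M_(q, p) :=
  S^T *m B^T *m (invmx (B *m g *m B^T))^T *m B.

Lemma riesz_mx_sub k p q (B : 'M[R]_(k, p)) g (S : 'M_(p, q)) (X : 'rV_q) :
  (X *m riesz_mx B g S <= B)%MS.
Proof. by rewrite /riesz_mx !mulmxA submxMl. Qed.

Lemma riesz_mx_ip k p q (B : 'M[R]_(k, p)) g (S : 'M_(p, q)) (X : 'rV_q) u :
  inner_product_mx g -> row_free B -> (u <= B)%MS ->
  ip g u (X *m riesz_mx B g S) = (u *m S *m X^T) 0 0.
Proof.
move=> pos_g freeB /submxP[d ->]; rewrite /ip /riesz_mx.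
rewrite !trmx_mul !trmxK !mulmxA.
have -> : d *m B *m g *m B^T = d *m (B *m g *m B^T) by rewrite !mulmxA.
by rewrite mulmxK ?gram_unitmx.
Qed.

Lemma orth_range_decomp m n (gW : 'M[R]_n) (T : 'M_(m, n)) (X : 'rV_n) :
  inner_product_mx gW ->
  exists2 X1, (X1 <= T)%MS & forall u, ip gW (u *m T) (X - X1) = 0.
Proof.
move=> pos_gW; exists (X *m riesz_mx (row_base T) gW gW).
  by rewrite -(eq_row_base T) riesz_mx_sub.
move=> u; rewrite ipBr riesz_mx_ip ?eq_row_base ?row_base_free ?submxMl //.
by rewrite /ip subrr.
Qed.

Lemma complement_of_ker_inj m n (T : 'M[R]_(m, n)) H (w : 'rV_m) :
  complement_of_ker T H -> (w <= H)%MS -> w *m T = 0 -> w = 0.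
Proof.
move=> [/mxdirect_addsP capHK _] wH wT0; apply/eqP.
by rewrite -submx0 -capHK sub_capmx wH sub_kermx wT0 eqxx.
Qed.

End InnerProduct.

Section Diamond.
Variables (R : realType) (m n : nat) (gV : 'M[R]_m) (gW : 'M[R]_n).
Variables (T : 'M[R]_(m, n)) (H : 'M[R]_m).
Hypotheses (pos_gV : inner_product_mx gV) (pos_gW : inner_product_mx gW).

Definition conformal_on (r : R) :=
  forall u v : 'rV[R]_m, (u <= H)%MS -> (v <= H)%MS ->
    ip gW (u *m T) (v *m T) = r * ip gV u v.

Lemma diamond_spec : is_diamond gV gW T H (diamond gV gW T H).
Proof.
apply: epsilon_spec; exists (riesz_mx (row_base H) gV (T *m gW)); split.
  move=> X _; split; first by rewrite -(eq_row_base H) riesz_mx_sub.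
  by move=> u uH; rewrite riesz_mx_ip ?eq_row_base ?row_base_free // /ip !mulmxA.
move=> X orthX; rewrite /riesz_mx !mulmxA.
have TgX0 : T *m gW *m X^T = 0 by apply: col_eq0 => u; rewrite !mulmxA; apply: orthX.
have -> : X *m (T *m gW)^T = (T *m gW *m X^T)^T by rewrite !trmx_mul trmxK mulmxA.
by rewrite TgX0 trmx0 !mul0mx.
Qed.

Local Notation P := (diamond gV gW T H).

Lemma diamond_sub (X : 'rV_n) : (X *m P <= H)%MS.
Proof.
have [[rangeP orthP] [X1 X1T orthX2]] := (diamond_spec, orth_range_decomp T X pos_gW).
have /eqP : (X - X1) *m P = 0 by apply: orthP.
by rewrite mulmxBl subr_eq0 => /eqP ->; case: (rangeP X1 X1T).
Qed.

Lemma diamond_adjoint (u w : 'rV_m) : (u <= H)%MS ->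
  ip gV u (w *m T *m P) = ip gW (u *m T) (w *m T).
Proof. by move=> uH; apply: ((diamond_spec.1 _ (submxMl _ _)).2). Qed.

Hypothesis compH : complement_of_ker T H.

Lemma orth_complement_eq0 (w : 'rV_m) : (w <= H)%MS ->
  (forall u, (u <= H)%MS -> ip gV u w = 0) -> w = 0.
Proof. by move=> wH orth_w; apply: ipxx_eq0 pos_gV (orth_w _ wH). Qed.

Lemma diamond_inj (w : 'rV_m) : (w <= H)%MS -> w *m T *m P = 0 -> w = 0.
Proof.
move=> wH wTP0; apply: (complement_of_ker_inj compH wH).
by apply: ipxx_eq0 pos_gW _; rewrite -(diamond_adjoint w wH) wTP0 ip0r.
Qed.

Lemma conformal_onE r : conformal_on r <->
  forall w : 'rV_m, (w <= H)%MS -> w *m T *m P = r *: w.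
Proof.
split=> [confH w wH | TPr u v uH vH]; last by rewrite -diamond_adjoint // TPr // ipZr.
apply/eqP; rewrite -subr_eq0; apply/eqP/orth_complement_eq0 => [|u uH].
  by rewrite addmx_sub ?eqmx_opp ?scalemx_sub ?diamond_sub.
by rewrite ipBr ipZr diamond_adjoint // confH // subrr.
Qed.

Lemma Qmap_sqr_eqZ r :
  (Qmap gV gW T H *m Qmap gV gW T H = r *: Qmap gV gW T H) <->
  forall w : 'rV_m, (w <= H)%MS -> w *m T *m P = r *: w.
Proof.
rewrite /Qmap; split=> [Q2 w wH | TPr]; last first.
  by apply/row_matrixP => i; rewrite !rowE -scalemxAr !mulmxA TPr ?diamond_sub // -scalemxAl.
have Q2X (X : 'rV_n) : X *m P *m T *m P *m T = r *: (X *m P *m T).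
  by have := congr1 (mulmx X) Q2; rewrite -scalemxAr !mulmxA.
have Q2w : w *m T *m P *m T *m P = r *: (w *m T *m P).
  apply/eqP; rewrite -subr_eq0; apply/eqP/(complement_of_ker_inj compH).
    by rewrite addmx_sub ?eqmx_opp ?scalemx_sub ?diamond_sub.
  by rewrite mulmxBl Q2X -scalemxAl subrr.
apply/eqP; rewrite -subr_eq0; apply/eqP/diamond_inj.
  by rewrite addmx_sub ?eqmx_opp ?scalemx_sub ?diamond_sub.
by rewrite !mulmxBl Q2w -!scalemxAl subrr.
Qed.

Lemma conformal_on_Qmap r : conformal_on r <->
  Qmap gV gW T H *m Qmap gV gW T H = r *: Qmap gV gW T H.
Proof. by rewrite conformal_onE Qmap_sqr_eqZ. Qed.

End Diamond.

Lemma geometric_with_Qmap (R : realType) m n (gV : 'M[R]_m) (gW : 'M[R]_n)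
    {T : 'M[R]_(m, n)} {r : R} :
  inner_product_mx gV -> inner_product_mx gW ->
  geometric_with gV gW T r <-> 0 < r /\
    exists2 H, complement_of_ker T H &
      Qmap gV gW T H *m Qmap gV gW T H = r *: Qmap gV gW T H.
Proof.
move=> pos_gV pos_gW.
split=> [[H [compH [r_gt0 confH]]] | [r_gt0 [H compH Q2]]].
  by split=> //; exists H => //; apply/conformal_on_Qmap.
by exists H; do 2!split=> //; apply/conformal_on_Qmap.
Qed.

Theorem mainTheorem4 (R : realType) (M N : Type) (m n : nat)
    (smooth : (M -> R) -> Prop) (f : M -> N)
    (gM : M -> 'M[R]_m) (gN : N -> 'M[R]_n) (df : M -> 'M[R]_(m, n))
    (hgM : forall x, inner_product_mx (gM x))
    (hgN : forall y, inner_product_mx (gN y)) :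
  conformal_riemannian_morphism smooth f gM gN df <->
  exists (lam : M -> R) (H : M -> 'M[R]_m),
    smooth lam /\ (forall x, 0 < lam x) /\
    (forall x, complement_of_ker (df x) (H x)) /\
    forall x,
      Qmap (gM x) (gN (f x)) (df x) (H x) *m Qmap (gM x) (gN (f x)) (df x) (H x)
      = lam x *: Qmap (gM x) (gN (f x)) (df x) (H x).
Proof.
split=> [[lam [sm_lam [lam_gt0 geo]]] | [lam [H [sm_lam [lam_gt0 [compH Q2]]]]]].
  have /ClassicalEpsilon.choice[H HP] : forall x, exists H, complement_of_ker (df x) H /\
      Qmap (gM x) (gN (f x)) (df x) H *m Qmap (gM x) (gN (f x)) (df x) H
      = lam x *: Qmap (gM x) (gN (f x)) (df x) H.
    move=> x; have /(geometric_with_Qmap (hgM x) (hgN (f x)))[_ [H compH Q2]] := geo x.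
    by exists H.
  by exists lam, H; do 2!split=> //; split=> x; case: (HP x).
exists lam; do 2!split=> //; move=> x.
apply/(geometric_with_Qmap (hgM x) (hgN (f x))).
by split; [exact: lam_gt0 | exists (H x); [exact: compH | exact: Q2]].
Qed.
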